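(* Every componentwise polymatroidal monomial ideal $I\subset K[x_1,\ldots,x_n]$ satisfies the non-pure dual exchange property.
   Context: For a monomial $u$, $\deg_{x_i}(u)$ is the exponent of $x_i$ in $u$; $G(I)$ is the minimal monomial generating set. A monomial ideal generated in a single degree is polymatroidal if for all $u,v\in G(I)$ and all $i$ with $\deg_{x_i}(u)>\deg_{x_i}(v)$ there exists $j$ with $\deg_{x_j}(u)<\deg_{x_j}(v)$ and $x_j(u/x_i)\in I$. $I_{\langle j\rangle}$ denotes the ideal generated by all monomials of degree $j$ in $I$; $I$ is componentwise polymatroidal if every nonzero $I_{\langle j\rangle}$ is polymatroidal. A monomial ideal $I$ satisfies the non-pure dual exchange property if for all $u,v \in G(I)$ with $\deg(u) \leq \deg(v)$ and all $i$ with $\deg_{x_i}(v) < \deg_{x_i}(u)$, there exists $j$ with $\deg_{x_j}(v) > \deg_{x_j}(u)$ and $x_i(v/x_j) \in I$. *)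

From mathcomp Require Import all_boot.
Set Implicit Arguments. Unset Strict Implicit. Unset Printing Implicit Defensive.

(* A monomial x_1^{a_1} ... x_n^{a_n} of K[x_1,...,x_n] is represented by its
   exponent vector; variables are indexed by 'I_n. *)
Definition monom (n : nat) := {ffun 'I_n -> nat}.

Definition mdeg n (u : monom n) : nat := \sum_(i < n) u i.

Definition mdivides n (u w : monom n) : Prop := forall i, u i <= w i.

(* x_j * (u / x_i)  (only used when deg_{x_i} u > 0) *)
Definition mexch n (u : monom n) (i j : 'I_n) : monom n :=
  [ffun k => u k - (k == i) + (k == j)].

(* A monomial ideal is identified with the set of monomials it contains;
   this set is exactly a set closed under multiplication by monomials. *)
Definition is_monomial_ideal n (I : monom n -> Prop) : Prop :=
  forall u w, I u -> mdivides u w -> I w.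

(* G(I): the minimal monomial generating set = minimal monomials of I. *)
Definition mingens n (I : monom n -> Prop) (u : monom n) : Prop :=
  I u /\ forall v, I v -> mdivides v u -> v = u.

Definition deg_component n (I : monom n -> Prop) (j : nat) (w : monom n) : Prop :=
  exists2 u, I u /\ mdeg u = j & mdivides u w.

Definition nonzero_ideal n (I : monom n -> Prop) : Prop := exists u, I u.

Definition single_degree n (I : monom n -> Prop) : Prop :=
  exists d, forall u, mingens I u -> mdeg u = d.

Definition polymatroidal n (I : monom n -> Prop) : Prop :=
  single_degree I /\
  forall u v, mingens I u -> mingens I v ->
  forall i : 'I_n, v i < u i ->
  exists j : 'I_n, u j < v j /\ I (mexch u i j).

Definition componentwise_polymatroidal n (I : monom n -> Prop) : Prop :=
  forall j, nonzero_ideal (deg_component I j) -> polymatroidal (deg_component I j).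

Definition nonpure_dual_exchange n (I : monom n -> Prop) : Prop :=
  forall u v, mingens I u -> mingens I v -> mdeg u <= mdeg v ->
  forall i : 'I_n, v i < u i ->
  exists j : 'I_n, u j < v j /\ I (mexch v j i).

From mathcomp Require Import all_boot.
From mathcomp Require Import zify.
Set Implicit Arguments. Unset Strict Implicit.

(* Let u, v be minimal generators of I with deg u <= deg v =: e and
   deg_{x_i} v < deg_{x_i} u.  Multiplying u by x_i^(e - deg u) gives a
   monomial w of degree e in the component J = I_<e>, and v has degree e too;
   both are minimal generators of J, which is polymatroidal by hypothesis.
   The heart of the file is the classical fact that the exchange property
   among the degree-e monomials of any set J implies the dual exchange
   property among them.  It is proved by induction on the distance
   \sum_l (a_l - b_l): while a has an excess over b that can be exchanged
   away without destroying the excess at x_i, exchange it (the distance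
   drops); otherwise a exceeds b only by one x_i, so any exchange x_j a / x_i
   provided by the exchange property divides b, hence equals b, and then
   x_i b / x_j = a.  Applying this to (w, v) yields j with w_j < v_j
   (so u_j < v_j) and x_i v / x_j in J, which lies in I. *)

Lemma mexchE n (u : monom n) i j k : mexch u i j k = u k - (k == i) + (k == j).
Proof. by rewrite ffunE. Qed.

(* Pointwise facts about exchanges reduce to arithmetic once the (at most two)
   comparisons between variable indices are decided. *)
Ltac decide_indices :=
  do 2 (try (case: eqVneq => [?|?]; subst)); rewrite /=.

Lemma sum_indicator n (k : 'I_n) : \sum_(l < n) (l == k : nat) = 1.
Proof. by rewrite (bigD1 k) //= eqxx big1 // => l /negbTE ->. Qed.

Lemma ltn_sum_pointwise n (f g : 'I_n -> nat) k :
  (forall l, f l <= g l) -> f k < g k -> \sum_(l < n) f l < \sum_(l < n) g l.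
Proof.
move=> fg fgk; rewrite (bigD1 k) //= [X in _ < X](bigD1 k) //=.
by rewrite -addSn leq_add // leq_sum.
Qed.

Lemma mdeg_mdivides n (u w : monom n) : mdivides u w -> mdeg u <= mdeg w.
Proof. by move=> uw; apply: leq_sum => k _; apply: uw. Qed.

Lemma mdivides_eq n (u w : monom n) : mdivides u w -> mdeg w <= mdeg u -> u = w.
Proof.
move=> uw deg_wu; apply/ffunP => k; apply/eqP; rewrite eqn_leq uw /= leqNgt.
by apply/negP => /(ltn_sum_pointwise uw); rewrite ltnNge deg_wu.
Qed.

Lemma mdeg_mexch n (u : monom n) (i j : 'I_n) : 0 < u i -> mdeg (mexch u i j) = mdeg u.
Proof.
move=> ui; apply/eqP; rewrite -(eqn_add2r 1) -{1}(sum_indicator i) -(sum_indicator j).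
rewrite /mdeg -!big_split /=; apply/eqP/eq_bigr => k _.
by rewrite mexchE; decide_indices; lia.
Qed.

Lemma mexchK n (u : monom n) (i j : 'I_n) : 0 < u i -> mexch (mexch u i j) j i = u.
Proof.
move=> ui; apply/ffunP => k; rewrite !mexchE.
by decide_indices; lia.
Qed.

Definition mlift n (u : monom n) (i : 'I_n) (c : nat) : monom n :=
  [ffun k => u k + (k == i) * c].

Lemma mdivides_mlift n (u : monom n) i c : mdivides u (mlift u i c).
Proof. by move=> k; rewrite ffunE leq_addr. Qed.

Lemma mdeg_mlift n (u : monom n) i c : mdeg (mlift u i c) = mdeg u + c.
Proof.
rewrite /mdeg (eq_bigr (fun k => u k + (k == i) * c)) => [|k _]; last by rewrite ffunE.
by rewrite big_split /= -big_distrl /= sum_indicator mul1n.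
Qed.

(* The total excess \sum_l (a_l - b_l) of a over b: the measure for the
   induction proving dual exchange. *)
Definition mdist n (a b : monom n) : nat := \sum_(l < n) (a l - b l).

Lemma mdist_ge n (a b : monom n) i : a i - b i <= mdist a b.
Proof. by rewrite /mdist (bigD1 i) //= leq_addr. Qed.

Lemma mdist_mexch n (a b : monom n) k j :
  b k < a k -> a j < b j -> mdist (mexch a k j) b < mdist a b.
Proof.
move=> bak abj; apply: (@ltn_sum_pointwise _ _ _ k) => [l|].
  by rewrite mexchE; decide_indices; lia.
by rewrite mexchE eqxx; decide_indices; lia.
Qed.

Lemma mexch_deficient n (a b : monom n) k j l :
  b k < a k -> mexch a k j l < b l -> a l < b l.
Proof. by move=> bak; rewrite mexchE; decide_indices; lia. Qed.

Lemma mexch_tight_mdivides n (a b : monom n) i j :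
  (forall k, a k - (k == i) <= b k) -> b i < a i -> a j < b j ->
  mdivides (mexch a i j) b.
Proof.
move=> tight bai abj k; have := tight k; rewrite mexchE.
by decide_indices; lia.
Qed.

Section DualExchange.
Variables (n : nat) (J : monom n -> Prop) (d : nat).

Hypothesis exchange : forall u v, J u -> J v -> mdeg u = d -> mdeg v = d ->
  forall i, v i < u i -> exists j, u j < v j /\ J (mexch u i j).

Lemma dual_exchange_dist m a b i :
  mdist a b <= m -> J a -> J b -> mdeg a = d -> mdeg b = d -> b i < a i ->
  exists j, a j < b j /\ J (mexch b j i).
Proof.
elim: m a => [|m IH] a dist_ab Ja Jb deg_a deg_b bai.
  by have := mdist_ge a b i; lia.
case: (pickP (fun k => (b k < a k) && (b i < a i - (i == k)))) =>
    [k /andP[bak bai_kept] | no_excess].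
- (* exchange away the excess at x_k, keeping an excess at x_i *)
  have [j [abj Ja']] := exchange Ja Jb deg_a deg_b bak.
  have deg_a' : mdeg (mexch a k j) = d by rewrite mdeg_mexch ?deg_a //; lia.
  have dist_a' : mdist (mexch a k j) b <= m.
    by have := mdist_mexch bak abj; lia.
  have bai_exch : b i < mexch a k j i by rewrite mexchE; lia.
  have [j' [abj' Jb']] := IH _ dist_a' Ja' Jb deg_a' deg_b bai_exch.
  by exists j'; split; first exact: mexch_deficient abj'.
- (* a exceeds b only by a single x_i: the exchange is forced *)
  have tight : forall k, a k - (k == i) <= b k.
    move=> k; move/negbT: (no_excess k); rewrite negb_and -!leqNgt.
    by decide_indices; case/orP; lia.
  have [j [abj Ja']] := exchange Ja Jb deg_a deg_b bai.
  have a'_eq_b : mexch a i j = b.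
    apply: mdivides_eq; first exact: mexch_tight_mdivides.
    by rewrite mdeg_mexch ?deg_a ?deg_b //; lia.
  by exists j; split; rewrite // -a'_eq_b mexchK //; lia.
Qed.

Lemma dual_exchange a b i : J a -> J b -> mdeg a = d -> mdeg b = d -> b i < a i ->
  exists j, a j < b j /\ J (mexch b j i).
Proof. exact: (@dual_exchange_dist (mdist a b)). Qed.

End DualExchange.

Section DegreeComponent.
Variables (n : nat) (I : monom n -> Prop) (e : nat).

Lemma mingens_deg_component w :
  deg_component I e w -> mdeg w = e -> mingens (deg_component I e) w.
Proof.
move=> Jw deg_w; split=> // v [u [_ deg_u] uv] vw.
by apply: mdivides_eq vw _; rewrite deg_w -deg_u mdeg_mdivides.
Qed.

Lemma deg_component_sub : is_monomial_ideal I ->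
  forall w, deg_component I e w -> I w.
Proof. by move=> idI w [u [Iu _] uw]; apply: idI Iu uw. Qed.

Lemma deg_component_exchange : polymatroidal (deg_component I e) ->
  forall u v, deg_component I e u -> deg_component I e v -> mdeg u = e -> mdeg v = e ->
  forall i, v i < u i -> exists j, u j < v j /\ deg_component I e (mexch u i j).
Proof.
by move=> [_ exch] u v Ju Jv deg_u deg_v; apply: exch; apply: mingens_deg_component.
Qed.

End DegreeComponent.

Theorem proposition1p5 (n : nat) (I : monom n -> Prop) :
  is_monomial_ideal I -> componentwise_polymatroidal I -> nonpure_dual_exchange I.
Proof.
move=> idI cpI u v [Iu _] [Iv _] deg_uv i vui.
set e := mdeg v; set w := mlift u i (e - mdeg u).
have deg_w : mdeg w = e by rewrite mdeg_mlift; lia.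
have Jw : deg_component I e w by exists w => //; split=> //; apply: idI (mdivides_mlift _ _ _).
have Jv : deg_component I e v by exists v.
have exch := deg_component_exchange (cpI e (ex_intro _ v Jv)).
have vwi : v i < w i by apply: leq_trans vui (mdivides_mlift _ _ _ i).
have [j [wvj Jx]] := dual_exchange exch Jw Jv deg_w (erefl e) vwi.
exists j; split; last exact: deg_component_sub Jx.
exact: leq_ltn_trans (mdivides_mlift _ _ _ j) wvj.
Qed.
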